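(* Let $p\colon X\to Y$ be a right fibration of simplicial sets and let $y$ be a vertex of $Y$. Then the natural map $p^{-1}(y)\to P(p,y)$ is the inclusion of a deformation retract.
   Context: A right fibration is a map of simplicial sets with the right lifting property with respect to all horn inclusions $\Lambda^k[n]\to\Delta[n]$ with $n\ge1$ and $0<k\le n$. $P(Y,y)$ is the simplicial set with $P(Y,y)_n=\{z\colon\Delta[n+1]\to Y\mid z(0)=y\}$, simplicial operators induced by $\bar f\colon[m+1]\to[n+1]$, $\bar f(0)=0$, $\bar f(k)=f(k-1)+1$ for $f\colon[m]\to[n]$; it has base vertex $*$ given by the $1$-simplex constant at $y$. The map $\bar\jmath\colon P(Y,y)\to Y$ sends an $(n+1)$-simplex $z$ to its face opposite vertex $0$. The right homotopy fibre $P(p,y)$ is the pullback of $X\xrightarrow{p}Y\xleftarrow{\bar\jmath}P(Y,y)$. The fibre $p^{-1}(y)$ is the pullback of $X\xrightarrow{p}Y\xleftarrow{y}\Delta[0]$, and the map $p^{-1}(y)\to P(p,y)$ is induced by $*\colon\Delta[0]\to P(Y,y)$ (note $\bar\jmath\circ *=y$). *)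

From HB Require Import structures.
From mathcomp Require Import all_boot.
From mathcomp Require Import zify.
From Stdlib Require Import ProofIrrelevance.

Set Implicit Arguments.
Unset Strict Implicit.
Unset Printing Implicit Defensive.

Definition monob m n (f : {ffun 'I_m.+1 -> 'I_n.+1}) : bool :=
  [forall i : 'I_m.+1, forall j : 'I_m.+1, (i <= j) ==> (f i <= f j)].

Definition ohom (m n : nat) := {f : {ffun 'I_m.+1 -> 'I_n.+1} | monob f}.

Definition oapp m n (f : ohom m n) (i : 'I_m.+1) : 'I_n.+1 := val f i.

Lemma monobP m n (f : {ffun 'I_m.+1 -> 'I_n.+1}) :
  reflect (forall i j : 'I_m.+1, i <= j -> f i <= f j) (monob f).
Proof.
apply: (iffP forallP) => [H i j hij | H i].
  by move/forallP: (H i) => /(_ j) /implyP; apply.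
by apply/forallP => j; apply/implyP; apply: H.
Qed.

Lemma oapp_mono m n (f : ohom m n) (i j : 'I_m.+1) : i <= j -> oapp f i <= oapp f j.
Proof. by move: i j; apply/monobP; case: f. Qed.

Lemma ohom_ext m n (f g : ohom m n) : (forall i, oapp f i = oapp g i) -> f = g.
Proof. by move=> H; apply: val_inj; apply/ffunP => i; apply: H. Qed.

Definition mkohom m n (h : 'I_m.+1 -> 'I_n.+1)
  (hm : forall i j : 'I_m.+1, i <= j -> h i <= h j) : ohom m n.
Proof.
exists [ffun i => h i]; apply/monobP => i j hij; rewrite !ffunE; exact: hm.
Defined.

Lemma mkohomE m n h hm i : oapp (@mkohom m n h hm) i = h i.
Proof. by rewrite /oapp /= ffunE. Qed.

Definition idh n : ohom n n := @mkohom n n id (fun i j h => h).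

Definition ocomp l m n (g : ohom m n) (f : ohom l m) : ohom l n :=
  @mkohom l n (fun i => oapp g (oapp f i))
    (fun i j h => oapp_mono g (oapp_mono f h)).

Definition cst m n (j : 'I_n.+1) : ohom m n :=
  @mkohom m n (fun _ => j) (fun i i' _ => leqnn j).

Record sSet := SSet {
  sob :> nat -> Type;
  sact : forall m n, ohom m n -> sob n -> sob m;
  sact_id : forall n (x : sob n), sact (idh n) x = x;
  sact_comp : forall l m n (g : ohom m n) (f : ohom l m) (x : sob n),
      sact (ocomp g f) x = sact f (sact g x)
}.
Arguments sact {s m n} f x.

Unset Implicit Arguments.
Record sMap (X Y : sSet) := SMap {
  smap :> forall n, X n -> Y n;
  smap_nat : forall m n (f : ohom m n) (x : X n),
      smap m (sact f x) = sact f (smap n x)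
}.
Set Implicit Arguments.
Arguments smap {X Y} s n x.
Arguments smap_nat {X Y} s {m n} f x.

Definition Delta (n : nat) : sSet.
Proof.
refine (@SSet (fun m => ohom m n) (fun m k f g => ocomp g f) _ _).
- by move=> k g; apply: ohom_ext => i; rewrite /ocomp mkohomE /idh mkohomE.
- by move=> l m k g f h; apply: ohom_ext => i; rewrite !mkohomE.
Defined.

Definition yon (X : sSet) n (x : X n) : sMap (Delta n) X.
Proof.
refine (@SMap (Delta n) X (fun m f => sact f x) _).
by move=> m k f g /=; rewrite sact_comp.
Defined.

Lemma sig_extP (A : Type) (P : A -> Prop) (a b : {x | P x}) :
  proj1_sig a = proj1_sig b -> a = b.
Proof.
case: a b => [a ha] [b hb] /= e; subst b.
by rewrite (proof_irrelevance _ ha hb).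
Qed.

Definition subclosed (X : sSet) (P : forall n, X n -> Prop) :=
  forall m n (f : ohom m n) (x : X n), P n x -> P m (sact f x).

Definition subS (X : sSet) (P : forall n, X n -> Prop) (HP : subclosed P) : sSet.
Proof.
refine (@SSet (fun n => {x : X n | P n x})
  (fun m n f x => exist _ (sact f (proj1_sig x)) (HP m n f _ (proj2_sig x))) _ _).
- by move=> n x; apply: sig_extP; rewrite /= sact_id.
- by move=> l m n g f x; apply: sig_extP; rewrite /= sact_comp.
Defined.

Definition incl (X : sSet) P (HP : subclosed P) : sMap (@subS X P HP) X.
Proof. by refine (@SMap (subS HP) X (fun n x => proj1_sig x) _). Defined.

Definition prodS (X Y : sSet) : sSet.
Proof.
refine (@SSet (fun n => (X n * Y n)%type)
  (fun m n f w => (sact f w.1, sact f w.2)) _ _).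
- by move=> n [x y]; rewrite /= !sact_id.
- by move=> l m n g f [x y]; rewrite /= !sact_comp.
Defined.

Definition pb_pred (X Y Z : sSet) (f : sMap X Z) (g : sMap Y Z) :
  forall n, prodS X Y n -> Prop := fun n w => f n w.1 = g n w.2.

Lemma pb_closed (X Y Z : sSet) (f : sMap X Z) (g : sMap Y Z) : subclosed (pb_pred f g).
Proof. by move=> m n a [x y]; rewrite /pb_pred /= !smap_nat => ->. Qed.

Definition pullback (X Y Z : sSet) (f : sMap X Z) (g : sMap Y Z) : sSet :=
  subS (@pb_closed X Y Z f g).

Definition horn_pred n (k : 'I_n.+1) : forall m, Delta n m -> Prop :=
  fun m f => exists j : 'I_n.+1, j != k /\ forall i, oapp f i != j.

Lemma horn_closed n (k : 'I_n.+1) : subclosed (horn_pred k).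
Proof.
move=> m l f g [j [hjk hj]]; exists j; split => // i.
by rewrite /= /ocomp mkohomE.
Qed.

Definition Horn n (k : 'I_n.+1) : sSet := subS (@horn_closed n k).

Definition horn_incl n (k : 'I_n.+1) : sMap (Horn k) (Delta n) := incl (@horn_closed n k).

Definition right_fibration (X Y : sSet) (p : sMap X Y) : Prop :=
  forall n (k : 'I_n.+1), 1 <= n -> 0 < k ->
  forall (a : sMap (Horn k) X) (b : sMap (Delta n) Y),
    (forall m w, p m (a m w) = b m (horn_incl k m w)) ->
    exists l : sMap (Delta n) X,
      (forall m w, l m (horn_incl k m w) = a m w) /\
      (forall m s, p m (l m s) = b m s).

Definition vtx0 n : ohom 0 n := @cst 0 n ord0.

Definition d0 n : ohom n n.+1.
Proof.
refine (@mkohom n n.+1 (fun i => lift ord0 i) _).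
by move=> i j hij; rewrite /= /bump /=.
Defined.

Definition bar_fun m n (f : ohom m n) (i : 'I_m.+2) : 'I_n.+2 :=
  if unlift ord0 i is Some j then lift ord0 (oapp f j) else ord0.

Lemma bar_fun_mono m n (f : ohom m n) (i j : 'I_m.+2) :
  i <= j -> bar_fun f i <= bar_fun f j.
Proof.
rewrite /bar_fun.
case: (unliftP ord0 i) => [i'|] ->; case: (unliftP ord0 j) => [j'|] -> //=.
- by rewrite /bump /= !add1n ltnS => h; apply: oapp_mono.
Qed.

Definition bar m n (f : ohom m n) : ohom m.+1 n.+1 :=
  @mkohom m.+1 n.+1 (bar_fun f) (@bar_fun_mono m n f).

Lemma bar_id n : bar (idh n) = idh n.+1.
Proof.
apply: ohom_ext => i; rewrite !mkohomE /bar_fun.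
by case: (unliftP ord0 i) => [i'|] ->; rewrite ?mkohomE.
Qed.

Lemma bar_comp l m n (g : ohom m n) (f : ohom l m) :
  bar (ocomp g f) = ocomp (bar g) (bar f).
Proof.
apply: ohom_ext => i; rewrite !mkohomE /bar_fun.
case: (unliftP ord0 i) => [i' ei|ei]; rewrite ?liftK ?mkohomE //.
by rewrite unlift_none.
Qed.

Lemma bar_vtx0 m n (f : ohom m n) : ocomp (bar f) (vtx0 m.+1) = vtx0 n.+1.
Proof. by apply: ohom_ext => i; rewrite !mkohomE /bar_fun unlift_none. Qed.

Lemma bar_d0 m n (f : ohom m n) : ocomp (bar f) (d0 m) = ocomp (d0 n) f.
Proof. by apply: ohom_ext => i; rewrite !mkohomE /bar_fun liftK. Qed.

Lemma ohom00 (f : ohom 0 0) : f = idh 0.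
Proof. by apply: ohom_ext => i; rewrite !ord1. Qed.

Definition shiftS (Y : sSet) : sSet.
Proof.
refine (@SSet (fun n => Y n.+1) (fun m n f z => sact (bar f) z) _ _).
- by move=> n z; rewrite bar_id sact_id.
- by move=> l m n g f z; rewrite bar_comp sact_comp.
Defined.

Definition path_pred (Y : sSet) (y : Y 0) : forall n, shiftS Y n -> Prop :=
  fun n z => sact (vtx0 n.+1) (z : Y n.+1) = y.

Lemma path_closed (Y : sSet) (y : Y 0) : subclosed (path_pred y).
Proof.
move=> m n f z; rewrite /path_pred /= -sact_comp.
by rewrite bar_vtx0.
Qed.

Definition PathS (Y : sSet) (y : Y 0) : sSet := subS (@path_closed Y y).

Definition jbar (Y : sSet) (y : Y 0) : sMap (PathS y) Y.
Proof.
refine (@SMap (PathS y) Y (fun n z => sact (d0 n) (proj1_sig z : Y n.+1)) _).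
by move=> m n f [z hz] /=; rewrite -[LHS]sact_comp -[RHS]sact_comp bar_d0.
Defined.

Definition pstar (Y : sSet) (y : Y 0) : PathS y 0.
Proof.
exists (sact (@cst 1 0 ord0) y).
by rewrite /path_pred -[LHS]sact_comp (ohom00 (ocomp _ _)) sact_id.
Defined.

Lemma jbar_pstar (Y : sSet) (y : Y 0) : jbar y 0 (pstar y) = y.
Proof. by rewrite /= -[LHS]sact_comp (ohom00 (ocomp _ _)) sact_id. Qed.

Definition Fibre (X Y : sSet) (p : sMap X Y) (y : Y 0) : sSet :=
  pullback p (yon y).

Definition Ppath (X Y : sSet) (p : sMap X Y) (y : Y 0) : sSet :=
  pullback p (jbar y).

Lemma fib_incl_pb (X Y : sSet) (p : sMap X Y) (y : Y 0) n (w : Fibre p y n) :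
  pb_pred p (jbar y) ((proj1_sig w).1, yon (pstar y) n (proj1_sig w).2).
Proof.
case: w => [[x t] h]; rewrite /pb_pred /= in h *.
rewrite h -!sact_comp; congr (sact _ y).
by apply: ohom_ext => i; rewrite !mkohomE /bar_fun ?liftK ?mkohomE !ord1.
Qed.

Definition fib_incl (X Y : sSet) (p : sMap X Y) (y : Y 0) :
  sMap (Fibre p y) (Ppath p y).
Proof.
refine (@SMap (Fibre p y) (Ppath p y)
  (fun n w => exist _ _ (fib_incl_pb w)) _).
move=> m n f [[x t] h]; apply: sig_extP => /=; congr pair.
by apply: sig_extP => /=; rewrite bar_comp sact_comp.
Defined.


Definition is_deformation_retract (A B : sSet) (i : sMap A B) : Prop :=
  exists (r : sMap B A) (H : sMap (prodS B (Delta 1)) B),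
    [/\ (forall n (a : A n), r n (i n a) = a),
        (forall n (b : B n), H n (b, @cst n 1 ord0) = i n (r n b)) &
        (forall n (b : B n), H n (b, @cst n 1 ord_max) = b)].

(* P(p,y) is the pullback of p along jbar, and P(Y,y) contracts onto its base vertex: along
   a : Delta[m] -> Delta[1] a path z is shrunk by collapsing onto its source y every vertex k+1
   with a(k) = 0.  Composed with jbar this is a homotopy P(p,y) x Delta[1] -> Y which ends at
   p o pr_X and is stationary on p^{-1}(y).  As p is a right fibration, the homotopy lifts to X
   relative to P(p,y) x {1} and to p^{-1}(y) x Delta[1].  The lift is built skeleton by
   skeleton: over a nondegenerate n-simplex one extends along
   Delta[n] x {1} u (boundary Delta[n]) x Delta[1] -> Delta[n] x Delta[1]
   by filling the n+1 simplices of the prism one after the other through the right horns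
   Lambda^{j+1}[n+1].  Paired with the contracted path, the lift deforms P(p,y) onto p^{-1}(y);
   its end at time 0 is the retraction. *)

From mathcomp Require Import all_boot zify.
From Stdlib Require Import Classical ClassicalEpsilon.

Set Implicit Arguments.
Unset Strict Implicit.
Unset Printing Implicit Defensive.

(** * Monotone maps *)

Lemma ocompE l m n (g : ohom m n) (f : ohom l m) i :
  oapp (ocomp g f) i = oapp g (oapp f i).
Proof. exact: mkohomE. Qed.

Lemma idhE n i : oapp (idh n) i = i.
Proof. exact: mkohomE. Qed.

Lemma cstE m n (j : 'I_n.+1) i : oapp (@cst m n j) i = j.
Proof. exact: mkohomE. Qed.

Lemma ocomp_idl m n (f : ohom m n) : ocomp (idh n) f = f.
Proof. by apply: ohom_ext => i; rewrite ocompE idhE. Qed.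

Lemma ocompA k l m n (h : ohom m n) (g : ohom l m) (f : ohom k l) :
  ocomp h (ocomp g f) = ocomp (ocomp h g) f.
Proof. by apply: ohom_ext => i; rewrite !ocompE. Qed.

Lemma cst_comp l m n (j : 'I_n.+1) (f : ohom l m) : ocomp (@cst m n j) f = cst l j.
Proof. by apply: ohom_ext => i; rewrite ocompE !cstE. Qed.

Lemma ohom0_eq m (f g : ohom m 0) : f = g.
Proof. by apply: ohom_ext => i; rewrite !ord1. Qed.

Definition osurj m n (f : ohom m n) := forall j, exists i, oapp f i = j.

Lemma osurj0 m (f : ohom m 0) : osurj f.
Proof. by move=> j; exists ord0; rewrite !ord1. Qed.

Lemma osurj_compl l m n (g : ohom m n) (f : ohom l m) :
  osurj (ocomp g f) -> osurj g.
Proof. by move=> sgf j; have [i <-] := sgf j; exists (oapp f i); rewrite ocompE. Qed.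

Definition coface n (j : 'I_n.+2) : ohom n n.+1.
Proof.
refine (@mkohom n n.+1 (lift j) _).
by move=> i i' le_ii'; rewrite /= /bump; case: (leqP j i); case: (leqP j i') => /=; lia.
Defined.

Lemma osurjN_coface m n (f : ohom m n.+1) :
  ~ osurj f -> exists j (f' : ohom m n), f = ocomp (coface j) f'.
Proof.
move=> nsf; have [j fNj] : exists j : 'I_n.+2, forall i, oapp f i != j.
  apply: NNPP => nex; apply: nsf => j; apply: NNPP => nhit; apply: nex.
  by exists j => i; apply/eqP => fij; apply: nhit; exists i.
have [g fE] : exists g : 'I_m.+1 -> 'I_n.+1, forall i, oapp f i = lift j (g i).
  exists (fun i => odflt ord0 (unlift j (oapp f i))) => i.
  by case: (unliftP j (oapp f i)) => [k|/eqP] //; rewrite (negPf (fNj i)).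
have g_mono (i i' : 'I_m.+1) : i <= i' -> g i <= g i'.
  move=> le_ii'; have := oapp_mono f le_ii'; rewrite !fE /= /bump.
  by case: (leqP j (g i)); case: (leqP j (g i')) => /=; lia.
by exists j, (mkohom g_mono); apply: ohom_ext => i; rewrite ocompE !mkohomE fE.
Qed.

Lemma unit_steps_id (f : nat -> nat) k :
  f 0 = 0 -> f k = k -> (forall i, i < k -> f i.+1 <= (f i).+1) ->
  forall i, i <= k -> f i = i.
Proof.
move=> f0 fk step i le_ik.
have f_le d : d <= k -> f d <= d.
  elim: d => [|d IH] lt_dk; first by rewrite f0.
  by rewrite (leq_trans (step d lt_dk)) // ltnS IH // ltnW.
have f_shift d : i + d <= k -> f (i + d) <= f i + d.
  elim: d => [|d IH] le_idk; first by rewrite !addn0.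
  rewrite addnS in le_idk *.
  by rewrite (leq_trans (step _ le_idk)) // addnS ltnS IH // ltnW.
have := f_shift (k - i); rewrite subnKC // fk => /(_ (leqnn k)).
have := f_le i le_ik; lia.
Qed.

Lemma osurj_endo_id k (u : ohom k k) : osurj u -> u = idh k.
Proof.
move=> su; pose f d : nat := oapp u (inord d).
have f_mono d d' : d <= d' <= k -> f d <= f d'.
  by case/andP=> le_dd' le_d'k; apply: oapp_mono; rewrite !inordK ?(leq_ltn_trans le_dd').
have hit d : d <= k -> exists d', d' <= k /\ f d' = d.
  move=> le_dk; have [i ui] := su (inord d); exists i; split; first by rewrite -ltnS.
  by rewrite /f inord_val ui inordK.
have f_step d : d < k -> f d.+1 <= (f d).+1.
  move=> lt_dk; case: (ltnP (f d) k) => [lt_fdk|le_kfd]; last first.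
    by apply: leq_trans (leqnSn _); apply: leq_trans le_kfd; rewrite -ltnS ltn_ord.
  have [d' [le_d'k fd']] := hit _ lt_fdk.
  case: (leqP d' d) => [le_d'd|lt_dd']; last by rewrite -fd' f_mono ?lt_dd'.
  by have := f_mono d' d; rewrite le_d'd (ltnW lt_dk) fd' ltnn => /(_ isT).
have f0 : f 0 = 0.
  have [d' [le_d'k fd']] := hit 0 (leq0n k).
  by apply/eqP; have := f_mono 0 d'; rewrite le_d'k fd' leqn0 => /(_ isT).
have fk : f k = k.
  have [d' [le_d'k fd']] := hit k (leqnn k).
  apply/eqP; rewrite eqn_leq -ltnS ltn_ord /=.
  by have := f_mono d' k; rewrite le_d'k leqnn fd' => /(_ isT).
apply: ohom_ext => i; apply: val_inj; rewrite idhE /=.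
by have := unit_steps_id f0 fk f_step (ltn_ord i : i <= k); rewrite /f inord_val.
Qed.

Lemma osurj_section m n (s : ohom m n) (i : 'I_m.+1) :
  osurj s -> exists d : ohom n m, ocomp s d = idh n /\ oapp d (oapp s i) = i.
Proof.
move=> ss.
pose d (j : 'I_n.+1) := if j == oapp s i then i else odflt i [pick i' | oapp s i' == j].
have sd j : oapp s (d j) = j.
  rewrite /d; case: eqP => [-> //|_]; case: pickP => [i' /eqP //|nhit].
  by have [i' si'] := ss j; move: (nhit i'); rewrite si' eqxx.
have d_mono (j j' : 'I_n.+1) : j <= j' -> d j <= d j'.
  move=> le_jj'; rewrite leqNgt; apply/negP => lt_dj'dj.
  have := oapp_mono s (ltnW lt_dj'dj); rewrite !sd => le_j'j.
  have e : j = j' by apply: val_inj; apply/eqP; rewrite eqn_leq le_jj' le_j'j.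
  by move: lt_dj'dj; rewrite e ltnn.
exists (mkohom d_mono); split; first by apply: ohom_ext => j; rewrite ocompE mkohomE idhE.
by rewrite mkohomE /d eqxx.
Qed.

(** * Skeleta and the Eilenberg-Zilber lemma *)

Section Skeleta.
Variable B : sSet.

(* [skel n b]: b is a degeneracy of a simplex of dimension < n.  An n-simplex c is thus
   nondegenerate iff [~ skel n c]. *)
Definition skel n m (b : B m) : Prop :=
  exists k (t : ohom m k) (c : B k), k < n /\ b = sact t c.

Lemma skel_sact n m m' (f : ohom m' m) (b : B m) : skel n b -> skel n (sact f b).
Proof.
by case=> k [t [c [lt_kn ->]]]; exists k, (ocomp t f), c; rewrite sact_comp.
Qed.

Lemma skel_closed n : subclosed (@skel n).
Proof. by move=> m m' f b; apply: skel_sact. Qed.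

Lemma skel_mono n n' m (b : B m) : n <= n' -> skel n b -> skel n' b.
Proof.
move=> le_nn' [k [t [c [lt_kn e]]]]; exists k, t, c; split=> //.
exact: leq_trans le_nn'.
Qed.

Lemma skel_dim m (b : B m) : skel m.+1 b.
Proof. by exists m, (idh m), b; rewrite sact_id. Qed.

Lemma osurjN_skel m k (u : ohom m k) (c : B k) : ~ osurj u -> skel k (sact u c).
Proof.
case: k u c => [|k] u c nsu; first by case: nsu; apply: osurj0.
have [j [u' ->]] := osurjN_coface nsu.
by exists k, u', (sact (coface j) c); rewrite sact_comp.
Qed.

Lemma skelN_sact_endo n (c c' : B n) (u : ohom n n) :
  ~ skel n c -> c = sact u c' -> u = idh n.
Proof.
move=> nc e; apply: osurj_endo_id; apply: NNPP => nsu.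
by apply: nc; rewrite e; apply: osurjN_skel.
Qed.

Lemma eilenberg_zilber_uniq m n (t t' : ohom m n) (c c' : B n) :
  osurj t -> osurj t' -> ~ skel n c -> ~ skel n c' -> sact t c = sact t' c' ->
  t = t' /\ c = c'.
Proof.
move=> st st' nc nc' e.
have [d [td _]] := osurj_section ord0 st.
have c_eq : c = sact (ocomp t' d) c' by rewrite sact_comp -e -sact_comp td sact_id.
have cc' : c = c' by rewrite c_eq (skelN_sact_endo nc c_eq) sact_id.
subst c'; split=> //; apply: ohom_ext => i.
have [di [tdi dti]] := osurj_section i st.
have ci : c = sact (ocomp t' di) c by rewrite sact_comp -e -sact_comp tdi sact_id.
by rewrite -[in RHS]dti -ocompE (skelN_sact_endo nc ci) idhE.
Qed.

Lemma skelN_sact m n (t : ohom m n) (c : B n) :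
  ~ skel n (sact t c) -> osurj t /\ ~ skel n c.
Proof.
move=> nb; split.
  by apply: NNPP => nst; apply: nb; apply: osurjN_skel.
by move=> sc; apply: nb; apply: skel_sact.
Qed.

Lemma subclosed_sact_osurj (P : forall m, B m -> Prop) m n (t : ohom m n) (c : B n) :
  subclosed P -> osurj t -> P m (sact t c) -> P n c.
Proof.
move=> P_closed st Ptc; have [d [td _]] := osurj_section ord0 st.
by rewrite -[c]sact_id -td sact_comp; apply: P_closed.
Qed.

Lemma skelS_decomp n m (b : B m) : skel n.+1 b -> ~ skel n b ->
  exists (t : ohom m n) (c : B n), [/\ b = sact t c, osurj t & ~ skel n c].
Proof.
case=> k [t [c [lt_kn1 e]]] nb.
have ek : k = n.
  by apply/eqP; rewrite eqn_leq -ltnS lt_kn1 leqNgt; apply/negP => lt_kn; apply: nb; exists k, t, c.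
subst k b; have [st nc] := skelN_sact nb.
by exists t, c.
Qed.

End Skeleta.

(** * The prism Delta[n] x Delta[1] *)

Lemma ohom1_val m (a : ohom m 1) i : (oapp a i : nat) = 0 \/ (oapp a i : nat) = 1.
Proof. by have := ltn_ord (oapp a i); case: (nat_of_ord _) => [|[|]]; auto. Qed.

Section Prism.
Variable n : nat.

(* The nondegenerate (n+1)-simplices of Delta[n] x Delta[1] are the pairs
   (prism_fst j, prism_snd j), with vertices (0,0),...,(j,0),(j,1),...,(n,1). *)
Definition prism_fst_fun (j : 'I_n.+1) (k : 'I_n.+2) : 'I_n.+1 :=
  inord (if k <= j then k : nat else k.-1).

Lemma prism_fst_funE j k : (prism_fst_fun j k : nat) = if k <= j then k : nat else k.-1.
Proof.
rewrite inordK //; have := ltn_ord j; have := ltn_ord k.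
by case: ifP => /=; lia.
Qed.

Definition prism_fst (j : 'I_n.+1) : ohom n.+1 n.
Proof.
refine (@mkohom n.+1 n (prism_fst_fun j) _).
by move=> k k' le_kk'; rewrite !prism_fst_funE; case: ifP; case: ifP => /=; lia.
Defined.

Lemma prism_fstE j k : (oapp (prism_fst j) k : nat) = if k <= j then k : nat else k.-1.
Proof. by rewrite mkohomE prism_fst_funE. Qed.

Definition prism_snd (j : 'I_n.+1) : ohom n.+1 1.
Proof.
refine (@mkohom n.+1 1 (fun k => if k <= j then ord0 else ord_max) _).
by move=> k k' le_kk'; case: ifP; case: ifP => //= ? ?; lia.
Defined.

Lemma prism_sndE j k : (oapp (prism_snd j) k : nat) = if k <= j then 0 else 1.
Proof. by rewrite mkohomE; case: ifP. Qed.

Definition in_prism_simplex l m (g : ohom m n) (a : ohom m 1) : Prop :=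
  forall i, ((oapp a i : nat) = 0 -> oapp g i <= l) /\
            ((oapp a i : nat) = 1 -> l <= oapp g i).

Definition prism_factor_fun m (g : ohom m n) (a : ohom m 1) (i : 'I_m.+1) : 'I_n.+2 :=
  inord (if (oapp a i : nat) == 0 then oapp g i : nat else (oapp g i).+1).

Lemma prism_factor_funE m g a i : (@prism_factor_fun m g a i : nat) =
  if (oapp a i : nat) == 0 then oapp g i : nat else (oapp g i).+1.
Proof. by rewrite inordK //; have := ltn_ord (oapp g i); case: ifP => _; lia. Qed.

Definition prism_factor m (g : ohom m n) (a : ohom m 1) : ohom m n.+1.
Proof.
refine (@mkohom m n.+1 (prism_factor_fun g a) _).
move=> i i' le_ii'; rewrite !prism_factor_funE.
have := oapp_mono g le_ii'; have := oapp_mono a le_ii'.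
by have := ohom1_val a i; have := ohom1_val a i'; case: eqP; case: eqP => /=; lia.
Defined.

Lemma prism_factorE m g a i : (oapp (@prism_factor m g a) i : nat) =
  if (oapp a i : nat) == 0 then oapp g i : nat else (oapp g i).+1.
Proof. by rewrite mkohomE prism_factor_funE. Qed.

Lemma prism_factorK (j : 'I_n.+1) m g a : in_prism_simplex j g a ->
  ocomp (prism_fst j) (@prism_factor m g a) = g /\
  ocomp (prism_snd j) (prism_factor g a) = a.
Proof.
move=> gaj; split; apply: ohom_ext => i; apply: val_inj; rewrite /= ocompE.
  rewrite prism_fstE prism_factorE; have [lo hi] := gaj i.
  by case: (ohom1_val a i) => ai; rewrite ai /= ?lo // ltnNge hi.
rewrite prism_sndE prism_factorE; have [lo hi] := gaj i.
by case: (ohom1_val a i) => ai; rewrite ai /= ?lo // ltnNge hi.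
Qed.

Lemma prism_factor_comp m m' (f : ohom m' m) g a :
  prism_factor (ocomp g f) (ocomp a f) = ocomp (prism_factor g a) f.
Proof. by apply: ohom_ext => i; apply: val_inj; rewrite /= ocompE !prism_factorE !ocompE. Qed.

Lemma in_prism_simplex_comp l m m' (f : ohom m' m) g a :
  in_prism_simplex l g a -> in_prism_simplex l (ocomp g f) (ocomp a f).
Proof. by move=> gal i; rewrite !ocompE; apply: gal. Qed.

Lemma in_prism_simplex_exists m (g : ohom m n) (a : ohom m 1) :
  exists l, l <= n /\ in_prism_simplex l g a.
Proof.
exists (\max_(i | (oapp a i : nat) == 0) (oapp g i : nat)); split.
  by apply/bigmax_leqP => i _; rewrite -ltnS.
move=> i; split => ai.
  by apply: (leq_bigmax_cond (F := fun i => (oapp g i : nat))); apply/eqP.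
apply/bigmax_leqP => i' /eqP ai'; case: (leqP i i') => le_ii'.
  by have := oapp_mono a le_ii'; lia.
by apply: oapp_mono; apply: ltnW.
Qed.

(* The subcomplex (boundary of Delta[n]) x Delta[1]  \cup  Delta[n] x {1}. *)
Definition on_base m (g : ohom m n) (a : ohom m 1) : Prop :=
  ~ osurj g \/ a = cst m ord_max.

(* on_base, together with the first j nondegenerate (n+1)-simplices. *)
Definition in_stage (j : nat) m (g : ohom m n) (a : ohom m 1) : Prop :=
  on_base g a \/ exists2 l, l < j & in_prism_simplex l g a.

Lemma on_base_comp m m' (f : ohom m' m) g a :
  on_base g a -> on_base (ocomp g f) (ocomp a f).
Proof.
case=> [nsg|->]; last by right; apply: cst_comp.
by left=> sgf; apply: nsg; apply: osurj_compl sgf.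
Qed.

Lemma in_stage_comp j m m' (f : ohom m' m) g a :
  in_stage j g a -> in_stage j (ocomp g f) (ocomp a f).
Proof.
case=> [ga|[l lt_lj gal]]; first by left; apply: on_base_comp.
by right; exists l => //; apply: in_prism_simplex_comp.
Qed.

Lemma in_stage0 m (g : ohom m n) a : in_stage 0 g a -> on_base g a.
Proof. by case=> [//|[]]. Qed.

Lemma in_stageS j m (g : ohom m n) a :
  in_stage j.+1 g a -> in_stage j g a \/ in_prism_simplex j g a.
Proof.
case=> [ga|[l lt_lj gal]]; first by left; left.
rewrite ltnS leq_eqVlt in lt_lj; case/orP: lt_lj => [/eqP <-|lt_lj]; first by right.
by left; right; exists l.
Qed.

Lemma in_stage_last m (g : ohom m n) a : in_stage n.+1 g a.
Proof. by have [l [le_ln gal]] := in_prism_simplex_exists g a; right; exists l. Qed.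

Lemma horn_in_stage (j : 'I_n.+1) m (h : ohom m n.+1) (v : 'I_n.+2) :
  (v : nat) <> j.+1 -> (forall i, oapp h i != v) ->
  in_stage j (ocomp (prism_fst j) h) (ocomp (prism_snd j) h).
Proof.
move=> vj hNv.
have hNv' i : (oapp h i : nat) <> v by move=> e; move: (hNv i); rewrite (val_inj e) eqxx.
have := ltn_ord v; have := ltn_ord j => ltj ltv.
case: (ltngtP v j) => [lt_vj|lt_jv|vj'].
- left; left => sg; have [i hi] := sg (inord v).
  have := hNv' i; have := congr1 val hi; rewrite /= ocompE prism_fstE inordK; last lia.
  by case: ifP => ? ? ?; lia.
- left; left => sg; have [i hi] := sg (inord v.-1).
  have := hNv' i; have := congr1 val hi; rewrite /= ocompE prism_fstE inordK; last lia.
  by case: ifP => ? ? ?; lia.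
- case: (posnP j) => [j0|jpos].
    left; right; apply: ohom_ext => i; apply: val_inj; rewrite /= ocompE prism_sndE cstE /=.
    by have := hNv' i; case: ifP => ? ?; lia.
  right; exists j.-1; first lia.
  by move=> i; rewrite !ocompE prism_fstE prism_sndE; have := hNv' i; case: ifP => ? ?; split; lia.
Qed.

Lemma in_stage_horn (j : 'I_n.+1) m (h : ohom m n.+1) :
  in_stage j (ocomp (prism_fst j) h) (ocomp (prism_snd j) h) ->
  exists v : 'I_n.+2, (v : nat) <> j.+1 /\ forall i, oapp h i != v.
Proof.
move=> hj; apply: NNPP => nv.
have hit (v : 'I_n.+2) : (v : nat) <> j.+1 -> exists i, (oapp h i : nat) = v.
  move=> vj; apply: NNPP => nhit; apply: nv; exists v; split=> // i.
  by apply/eqP => e; apply: nhit; exists i; rewrite e.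
have := ltn_ord j => ltj.
case: hj => [[nsg|hsnd]|[l lt_lj hl]].
- apply: nsg => w; case: (leqP w j) => le_wj.
    have [i hi] := hit (inord w) ltac:(rewrite inordK; lia).
    by exists i; apply: val_inj; rewrite /= ocompE prism_fstE hi inordK ?ifT //; lia.
  have [i hi] := hit (inord w.+1) ltac:(rewrite inordK; have := ltn_ord w; lia).
  exists i; apply: val_inj; rewrite /= ocompE prism_fstE hi inordK ?ifF //; last first.
    by have := ltn_ord w; lia.
  by apply/negbTE; rewrite -leqNgt ltnW.
- have [i hi] := hit ord0 ltac:(by []).
  by have := congr1 (fun a => oapp a i : nat) hsnd; rewrite /= ocompE prism_sndE hi cstE.
- have [i hi] := hit (inord j) ltac:(rewrite inordK; lia).
  have [lo _] := hl i; move: lo; rewrite !ocompE prism_fstE prism_sndE hi inordK; last lia.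
  by rewrite leqnn /=; lia.
Qed.

End Prism.

Section PrismLift.
Variables (X Y : sSet) (p : sMap X Y).
Hypothesis p_rfib : right_fibration p.

Lemma smap_Delta n (l : sMap (Delta n) X) m (s : ohom m n) : l m s = sact s (l n (idh n)).
Proof. by rewrite -smap_nat /= ocomp_idl. Qed.

Lemma right_fibration_horn_filler n (k : 'I_n.+1) (a : forall m, ohom m n -> X m) (z : Y n) :
  1 <= n -> 0 < k ->
  (forall m m' (f : ohom m' m) h, horn_pred k h -> a m' (ocomp h f) = sact f (a m h)) ->
  (forall m h, horn_pred k h -> p m (a m h) = sact h z) ->
  exists x : X n, p n x = z /\ forall m h, horn_pred k h -> sact h x = a m h.
Proof.
move=> n_pos k_pos a_nat pa.
pose ak := @SMap (Horn k) X (fun m w => a m (proj1_sig w))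
  (fun m m' f w => a_nat _ _ f _ (proj2_sig w)).
have [l [l_horn pl]] := p_rfib n_pos k_pos (b := yon z) (a := ak)
  (fun m w => pa m _ (proj2_sig w)).
exists (l n (idh n)); split; first by rewrite pl /= sact_id.
by move=> m h hk; rewrite -smap_Delta (l_horn m (exist _ h hk)).
Qed.

Variable n : nat.

(* A map Delta[n] x Delta[1] -> S, by its values on all pairs of simplices. *)
Definition prism_map (S : sSet) := forall m, ohom m n -> ohom m 1 -> S m.

Definition natural_on S (P : forall m, ohom m n -> ohom m 1 -> Prop) (F : prism_map S) :=
  forall m m' (f : ohom m' m) g a, P m g a ->
    F m' (ocomp g f) (ocomp a f) = sact f (F m g a).

Variable Z : prism_map Y.
Hypothesis Z_nat : forall m m' (f : ohom m' m) (g : ohom m n) (a : ohom m 1),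
  Z (ocomp g f) (ocomp a f) = sact f (Z g a).

(* The j-th prism simplex meets stage j exactly in the right horn Lambda^{j+1}[n+1]. *)
Lemma prism_simplex_filler (j : 'I_n.+1) (F : prism_map X) :
  natural_on (@in_stage n j) F ->
  (forall m g a, in_stage j g a -> p m (F m g a) = Z g a) ->
  exists K : X n.+1, p n.+1 K = Z (prism_fst j) (prism_snd j) /\
    forall m (h : ohom m n.+1),
      in_stage j (ocomp (prism_fst j) h) (ocomp (prism_snd j) h) ->
      sact h K = F m (ocomp (prism_fst j) h) (ocomp (prism_snd j) h).
Proof.
move=> F_nat pF; have lt_j1 : j.+1 < n.+2 by rewrite ltnS.
pose k : 'I_n.+2 := Ordinal lt_j1.
have horn_stage m (h : ohom m n.+1) :
    horn_pred k h -> in_stage j (ocomp (prism_fst j) h) (ocomp (prism_snd j) h).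
  case=> v [vk hNv]; apply: (horn_in_stage (v := v)) => // vj.
  by move: vk; rewrite (_ : v = k) ?eqxx //; apply: val_inj.
pose a m (h : ohom m n.+1) := F m (ocomp (prism_fst j) h) (ocomp (prism_snd j) h).
have a_nat m m' (f : ohom m' m) (h : ohom m n.+1) :
    horn_pred k h -> a m' (ocomp h f) = sact f (a m h).
  by move=> hk; rewrite /a !ocompA; apply: F_nat; apply: horn_stage.
have pa m (h : ohom m n.+1) :
    horn_pred k h -> p m (a m h) = sact h (Z (prism_fst j) (prism_snd j)).
  by move=> hk; rewrite pF ?Z_nat //; apply: horn_stage.
have [K [pK K_horn]] := right_fibration_horn_filler (k := k) isT isT a_nat pa.
exists K; split=> // m h hj; apply: K_horn.
have [v [vj hNv]] := in_stage_horn hj; exists v; split=> //.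
by apply/eqP=> vk; apply: vj; rewrite vk.
Qed.

Lemma prism_stage_extend (j : 'I_n.+1) (F : prism_map X) :
  natural_on (@in_stage n j) F ->
  (forall m g a, in_stage j g a -> p m (F m g a) = Z g a) ->
  exists F' : prism_map X,
    [/\ natural_on (@in_stage n j.+1) F',
        forall m g a, in_stage j g a -> F' m g a = F m g a &
        forall m g a, in_stage j.+1 g a -> p m (F' m g a) = Z g a].
Proof.
move=> F_nat pF; have [K [pK K_stage]] := prism_simplex_filler F_nat pF.
pose F' m g a := if excluded_middle_informative (in_stage j g a) then F m g a
                 else sact (prism_factor g a) K.
have F'_stage m g a : in_stage j g a -> F' m g a = F m g a.
  by rewrite /F'; case: excluded_middle_informative.
have F'_simplex m g a : in_prism_simplex j g a -> F' m g a = sact (prism_factor g a) K.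
  move=> gaj; have [fst_fac snd_fac] := prism_factorK gaj.
  rewrite /F'; case: excluded_middle_informative => // ga.
  by rewrite K_stage fst_fac ?snd_fac.
exists F'; split=> // [m m' f g a|m g a] /in_stageS [ga|gaj].
- by rewrite (F'_stage _ _ _ (in_stage_comp f ga)) F'_stage //; apply: F_nat.
- by rewrite !F'_simplex ?prism_factor_comp ?sact_comp //; apply: in_prism_simplex_comp.
- by rewrite F'_stage ?pF.
- have [fst_fac snd_fac] := prism_factorK gaj.
  by rewrite F'_simplex // smap_nat pK -Z_nat fst_fac snd_fac.
Qed.

Lemma prism_lift (D : prism_map X) :
  natural_on (@on_base n) D -> (forall m g a, on_base g a -> p m (D m g a) = Z g a) ->
  exists F : prism_map X,
    [/\ forall m m' (f : ohom m' m) g a, F m' (ocomp g f) (ocomp a f) = sact f (F m g a),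
        forall m g a, on_base g a -> F m g a = D m g a &
        forall m g a, p m (F m g a) = Z g a].
Proof.
move=> D_nat pD.
have stages j : j <= n.+1 -> exists F : prism_map X,
    [/\ natural_on (@in_stage n j) F,
        forall m g a, on_base g a -> F m g a = D m g a &
        forall m g a, in_stage j g a -> p m (F m g a) = Z g a].
  elim: j => [_|j IH lt_jn].
    by exists D; split=> // [m m' f g a|m g a] /in_stage0; [apply: D_nat | apply: pD].
  have [F [F_nat FD pF]] := IH (ltnW lt_jn).
  have [F' [F'_nat F'F pF']] := @prism_stage_extend (Ordinal lt_jn) F F_nat pF.
  by exists F'; split=> // m g a ga; rewrite F'F ?FD //; left.
have [F [F_nat FD pF]] := stages n.+1 (leqnn n.+1).
by exists F; split=> // [m m' f g a|m g a]; [apply: F_nat | apply: pF]; apply: in_stage_last.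
Qed.

End PrismLift.

(** * Lifting homotopies along right fibrations *)

Section HomotopyLift.
Variables (X Y : sSet) (p : sMap X Y).
Hypothesis p_rfib : right_fibration p.
Variables (B : sSet) (A : forall m, B m -> Prop).
Hypothesis A_closed : subclosed A.
Variables (G : sMap (prodS B (Delta 1)) Y) (h1 : sMap B X).
Hypothesis p_h1 : forall m b, p m (h1 m b) = G m (b, cst m ord_max).
Hypothesis G_stationary : forall m b a, A b -> G m (b, a) = G m (b, cst m ord_max).

Definition lifts_on_skel n (H : forall m, B m -> ohom m 1 -> X m) : Prop :=
  [/\ forall m m' (f : ohom m' m) b a, skel n b -> H m' (sact f b) (ocomp a f) = sact f (H m b a),
      forall m b a, skel n b -> p m (H m b a) = G m (b, a),
      forall m b, skel n b -> H m b (cst m ord_max) = h1 m b &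
      forall m b a, skel n b -> A b -> H m b a = h1 m b].

Lemma lifts_on_skel0 H : lifts_on_skel 0 H.
Proof.
have skel0 m (b : B m) : ~ skel 0 b by case=> k [? [? []]].
by split=> m *; exfalso; apply: skel0; eassumption.
Qed.

Lemma A_sact m m' (f : ohom m' m) (b : B m) : A b -> A (sact f b).
Proof. exact: A_closed. Qed.

Definition lifts_prism n H (c : B n) (F : prism_map n X) : Prop :=
  [/\ forall m m' (f : ohom m' m) g a, F m' (ocomp g f) (ocomp a f) = sact f (F m g a),
      forall m g a, p m (F m g a) = G m (sact g c, a),
      forall m g, F m g (cst m ord_max) = h1 m (sact g c),
      forall m g a, ~ osurj g -> F m g a = H m (sact g c) a &
      A c -> forall m g a, F m g a = h1 m (sact g c)].

Lemma simplex_prism_lift n H (c : B n) : lifts_on_skel n H -> exists F, lifts_prism H c F.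
Proof.
case=> H_nat pH H_top H_A.
have skel_face m (g : ohom m n) : ~ osurj g -> skel n (sact g c) by apply: osurjN_skel.
case: (classic (A c)) => [Ac|nAc].
  exists (fun m g _ => h1 m (sact g c)); split=> // [m m' f g a|m g a|m g a nsg].
  - by rewrite sact_comp smap_nat.
  - by rewrite p_h1 [RHS]G_stationary //; apply: A_sact.
  - by rewrite H_A //; [apply: skel_face | apply: A_sact].
pose D m (g : ohom m n) a :=
  if excluded_middle_informative (a = cst m ord_max) then h1 m (sact g c) else H m (sact g c) a.
have D_top m g : D m g (cst m ord_max) = h1 m (sact g c).
  by rewrite /D; case: excluded_middle_informative.
have D_face m g a : ~ osurj g -> D m g a = H m (sact g c) a.
  move=> nsg; rewrite /D; case: excluded_middle_informative => // ea.
  by rewrite [in RHS]ea H_top //; apply: skel_face.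
have D_nat : natural_on (@on_base n) D.
  move=> m m' f g a [nsg|->]; last by rewrite cst_comp !D_top sact_comp smap_nat.
  have nsgf : ~ osurj (ocomp g f) by move/osurj_compl.
  by rewrite !D_face // sact_comp H_nat //; apply: skel_face.
have pD m g a : on_base g a -> p m (D m g a) = G m (sact g c, a).
  case=> [nsg|->]; last by rewrite D_top p_h1.
  by rewrite D_face // pH //; apply: skel_face.
have Z_nat m m' (f : ohom m' m) (g : ohom m n) a :
    G m' (sact (ocomp g f) c, ocomp a f) = sact f (G m (sact g c, a)).
  by rewrite sact_comp; apply: (smap_nat G f (sact g c, a)).
have [F [F_nat FD pF]] := prism_lift p_rfib (Z := fun m g a => G m (sact g c, a)) Z_nat D_nat pD.
exists F; split=> // [m g|m g a nsg].
- by rewrite FD ?D_top //; right.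
- by rewrite FD ?D_face //; left.
Qed.

Lemma extend_over_nondeg n H (F : forall c : B n, prism_map n X) :
  (forall c m g a, ~ osurj g -> F c m g a = H m (sact g c) a) ->
  exists H' : forall m, B m -> ohom m 1 -> X m,
    (forall m b a, skel n b -> H' m b a = H m b a) /\
    (forall m (t : ohom m n) c a, ~ skel n c -> H' m (sact t c) a = F c m t a).
Proof.
move=> F_face.
pose decomp m (b : B m) : option (ohom m n * B n) :=
  if excluded_middle_informative (exists tc : ohom m n * B n, b = sact tc.1 tc.2) is left e
  then Some (sval (constructive_indefinite_description _ e)) else None.
pose H' m b a := if excluded_middle_informative (skel n b) then H m b a
  else if decomp m b is Some (t, c) then F c m t a else H m b a.
have H'_low m b a : skel n b -> H' m b a = H m b a.
  by rewrite /H'; case: excluded_middle_informative.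
exists H'; split=> // m t c a nc.
case: (classic (skel n (sact t c))) => [tc_low|tc_top].
  rewrite H'_low // F_face // => st; apply: nc.
  exact: subclosed_sact_osurj (@skel_closed B n) st tc_low.
rewrite /H' /decomp.
case: (excluded_middle_informative (skel n (sact t c))) => [/tc_top //|_] /=.
destruct (excluded_middle_informative (exists tc : ohom m n * B n, sact t c = sact tc.1 tc.2))
  as [e|ne]; last by case: ne; exists (t, c).
case: (constructive_indefinite_description _ e) => [[t' c'] /= e'].
(* Eilenberg-Zilber uniqueness: the chosen decomposition is (t, c) itself. *)
have [st _] := skelN_sact tc_top.
have [st' nc'] : osurj t' /\ ~ skel n c' by apply: skelN_sact; rewrite -e'.
by have [-> ->] := eilenberg_zilber_uniq st' st nc' nc (esym e').
Qed.

Lemma lifts_on_skel_extend n H : lifts_on_skel n H ->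
  exists H', lifts_on_skel n.+1 H' /\ forall m b a, skel n b -> H' m b a = H m b a.
Proof.
move=> HH; have [H_nat pH H_top H_A] := HH.
have [F F_spec] : exists F : forall c : B n, prism_map n X, forall c, lifts_prism H c (F c).
  by exists (fun c => sval (constructive_indefinite_description _ (simplex_prism_lift c HH))) => c;
     apply: svalP.
have F_face c m g a : ~ osurj g -> F c m g a = H m (sact g c) a.
  by have [_ _ _ F_face _] := F_spec c; apply: F_face.
have [H' [H'_low H'_top]] := extend_over_nondeg F_face.
have H'_new m (b : B m) : skel n.+1 b -> ~ skel n b ->
    exists t c, [/\ b = sact t c, osurj t, ~ skel n c & forall a, H' m b a = F c m t a].
  move=> b_low b_top; have [t [c [-> st nc]]] := skelS_decomp b_low b_top.
  by exists t, c; split=> // a; apply: H'_top.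
exists H'; split=> //; split=> [m m' f b a|m b a|m b|m b a] b_low.
- case: (classic (skel n b)) => [b_low'|b_top].
    by rewrite !H'_low ?H_nat //; apply: skel_sact.
  have [t [c [-> _ nc H'E]]] := H'_new _ _ b_low b_top.
  have [F_nat _ _ _ _] := F_spec c.
  by rewrite -sact_comp H'_top // H'E F_nat.
- case: (classic (skel n b)) => [b_low'|b_top]; first by rewrite H'_low ?pH.
  have [t [c [-> _ _ ->]]] := H'_new _ _ b_low b_top.
  by have [_ -> _ _ _] := F_spec c.
- case: (classic (skel n b)) => [b_low'|b_top]; first by rewrite H'_low ?H_top.
  have [t [c [-> _ _ ->]]] := H'_new _ _ b_low b_top.
  by have [_ _ -> _ _] := F_spec c.
- case: (classic (skel n b)) => [b_low' Ab|b_top Ab]; first by rewrite H'_low ?H_A.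
  have [t [c [eb st _ ->]]] := H'_new _ _ b_low b_top.
  have [_ _ _ _ ->] := F_spec c; first by rewrite eb.
  by apply: subclosed_sact_osurj A_closed st _; rewrite -eb.
Qed.

Definition skel_lift_step n (H : {H | lifts_on_skel n H}) :
  {H' | lifts_on_skel n.+1 H' /\ forall m b a, skel n b -> H' m b a = sval H m b a} :=
  constructive_indefinite_description _ (lifts_on_skel_extend (svalP H)).

Fixpoint skel_lift n : {H | lifts_on_skel n H} :=
  if n is n'.+1 then
    let H' := skel_lift_step (skel_lift n') in exist _ (sval H') (proj1 (svalP H'))
  else exist _ (fun m b _ => h1 m b) (lifts_on_skel0 _).
Arguments skel_lift : simpl never.

Lemma skel_lift_agree n n' m (b : B m) a : n <= n' -> skel n b ->
  sval (skel_lift n') m b a = sval (skel_lift n) m b a.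
Proof.
move=> + b_low; elim: n' => [|n' IH]; first by rewrite leqn0 => /eqP ->.
rewrite leq_eqVlt => /orP [/eqP -> //|lt_nn'] /=.
by rewrite (proj2 (svalP (skel_lift_step _))) ?IH //; apply: skel_mono b_low.
Qed.

Theorem right_fibration_homotopy_lift :
  exists H : sMap (prodS B (Delta 1)) X,
    [/\ forall m w, p m (H m w) = G m w,
        forall m b, H m (b, cst m ord_max) = h1 m b &
        forall m b a, A b -> H m (b, a) = h1 m b].
Proof.
pose H m (b : B m) a := sval (skel_lift m.+1) m b a.
have H_lifts m := svalP (skel_lift m.+1).
have H_nat m m' (f : ohom m' m) b a : H m' (sact f b) (ocomp a f) = sact f (H m b a).
  pose N := maxn m.+1 m'.+1; have [lift_nat _ _ _] := svalP (skel_lift N).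
  have le_mN : m.+1 <= N by apply: leq_maxl.
  rewrite /H -(skel_lift_agree (ocomp a f) (leq_maxr _ _ : m'.+1 <= N) (skel_dim (sact f b))).
  rewrite -(skel_lift_agree a le_mN (skel_dim b)).
  exact: lift_nat (skel_mono le_mN (skel_dim b)).
exists (@SMap (prodS B (Delta 1)) X (fun m w => H m w.1 w.2)
                (fun m' m f w => H_nat m m' f w.1 w.2)).
split=> [m [b a]|m b|m b a Ab] /=.
- by have [_ pH _ _] := H_lifts m; apply: pH (skel_dim b).
- by have [_ _ H_top _] := H_lifts m; apply: H_top (skel_dim b).
- by have [_ _ _ H_A] := H_lifts m; apply: H_A (skel_dim b) Ab.
Qed.

End HomotopyLift.

Section SimplicialMaps.
Variables W X Y Z : sSet.

Definition sid : sMap X X := @SMap X X (fun _ x => x) (fun _ _ _ _ => erefl).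

Definition scomp (g : sMap Y Z) (f : sMap X Y) : sMap X Z :=
  @SMap X Z (fun m x => g m (f m x))
    (fun m n h x => etrans (congr1 _ (smap_nat f h x)) (smap_nat g h _)).

Definition spair (f : sMap W X) (g : sMap W Y) : sMap W (prodS X Y) :=
  @SMap W (prodS X Y) (fun m w => (f m w, g m w))
    (fun m n h w => f_equal2 pair (smap_nat f h w) (smap_nat g h w)).

Definition prod_fst : sMap (prodS X Y) X :=
  @SMap (prodS X Y) X (fun m w => w.1) (fun _ _ _ _ => erefl).

Definition prod_snd : sMap (prodS X Y) Y :=
  @SMap (prodS X Y) Y (fun m w => w.2) (fun _ _ _ _ => erefl).

Definition sconst n (v : 'I_n.+1) : sMap X (Delta n) :=
  @SMap X (Delta n) (fun m _ => cst m v) (fun m m' f _ => esym (cst_comp v f)).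

Variables (f : sMap X Z) (g : sMap Y Z).

Definition pb_fst : sMap (pullback f g) X :=
  @SMap (pullback f g) X (fun m w => (sval w).1) (fun _ _ _ _ => erefl).

Definition pb_snd : sMap (pullback f g) Y :=
  @SMap (pullback f g) Y (fun m w => (sval w).2) (fun _ _ _ _ => erefl).

Lemma pb_square m (w : pullback f g m) : f m (pb_fst m w) = g m (pb_snd m w).
Proof. exact: svalP w. Qed.

Lemma pb_ext m (u v : pullback f g m) :
  pb_fst m u = pb_fst m v -> pb_snd m u = pb_snd m v -> u = v.
Proof.
by case: u v => [[x1 y1] ?] [[x2 y2] ?] /= e1 e2; apply: sig_extP; rewrite /= e1 e2.
Qed.

Definition pb_lift (h : sMap W X) (k : sMap W Y) (hk : forall m w, f m (h m w) = g m (k m w)) :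
  sMap W (pullback f g).
Proof.
refine (@SMap W (pullback f g) (fun m w => exist _ (h m w, k m w) (hk m w)) _).
by move=> m n e w; apply: sig_extP; rewrite /= !smap_nat.
Defined.

End SimplicialMaps.
Arguments sid {X}.
Arguments prod_fst {X Y}.
Arguments prod_snd {X Y}.
Arguments sconst {X n}.
Arguments pb_lift {W X Y Z f g} h k hk.

(** * The path space and the retraction *)

Lemma vtx0E n i : oapp (vtx0 n) i = ord0.
Proof. exact: mkohomE. Qed.

Lemma bar0 m n (f : ohom m n) : oapp (bar f) ord0 = ord0.
Proof. by rewrite mkohomE /bar_fun unlift_none. Qed.

Lemma barS m n (f : ohom m n) i : oapp (bar f) (lift ord0 i) = lift ord0 (oapp f i).
Proof. by rewrite mkohomE /bar_fun liftK. Qed.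

Lemma ohom_extS m n (f g : ohom m.+1 n) :
  oapp f ord0 = oapp g ord0 -> (forall i, oapp f (lift ord0 i) = oapp g (lift ord0 i)) -> f = g.
Proof. by move=> f0 fS; apply: ohom_ext => i; case: (unliftP ord0 i) => [j|] ->. Qed.

Lemma ohom1_nz m (a : ohom m 1) (i i' : 'I_m.+1) :
  i <= i' -> oapp a i != ord0 -> oapp a i' != ord0.
Proof.
move=> le_ii'; apply: contra => /eqP ai'0; apply/eqP/val_inj.
by have := oapp_mono a le_ii'; rewrite ai'0 /= leqn0 => /eqP.
Qed.

Definition contract_fun m (a : ohom m 1) (i : 'I_m.+2) : 'I_m.+2 :=
  if unlift ord0 i is Some j then (if oapp a j == ord0 then ord0 else i) else ord0.

Lemma contract_fun_mono m (a : ohom m 1) (i i' : 'I_m.+2) :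
  i <= i' -> contract_fun a i <= contract_fun a i'.
Proof.
rewrite /contract_fun.
case: (unliftP ord0 i) => [j|] ->; case: (unliftP ord0 i') => [j'|] -> //=.
rewrite /bump /= !add1n ltnS => le_jj'; case: eqP => [//|/eqP aj].
by rewrite ifN //; apply: ohom1_nz aj.
Qed.

Definition contract m (a : ohom m 1) : ohom m.+1 m.+1 :=
  @mkohom m.+1 m.+1 (contract_fun a) (@contract_fun_mono m a).

Lemma contract0 m (a : ohom m 1) : oapp (contract a) ord0 = ord0.
Proof. by rewrite mkohomE /contract_fun unlift_none. Qed.

Lemma contractS m (a : ohom m 1) i :
  oapp (contract a) (lift ord0 i) = if oapp a i == ord0 then ord0 else lift ord0 i.
Proof. by rewrite mkohomE /contract_fun liftK. Qed.

Lemma contract_vtx0 m (a : ohom m 1) : ocomp (contract a) (vtx0 m.+1) = vtx0 m.+1.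
Proof. by apply: ohom_ext => i; rewrite ocompE !vtx0E contract0. Qed.

Lemma bar_contract m m' (f : ohom m' m) (a : ohom m 1) :
  ocomp (bar f) (contract (ocomp a f)) = ocomp (contract a) (bar f).
Proof.
apply: ohom_extS => [|i]; first by rewrite !ocompE contract0 !bar0 contract0.
rewrite !ocompE contractS barS contractS ocompE.
by case: eqP => _; [rewrite bar0 | rewrite barS].
Qed.

Lemma contract_top m : contract (cst m ord_max) = idh m.+1.
Proof. by apply: ohom_extS => [|i]; rewrite ?contract0 ?contractS ?cstE idhE. Qed.

Lemma contract_bot m : contract (cst m ord0) = ocomp (vtx0 m.+1) (cst m.+1 ord0).
Proof. by apply: ohom_extS => [|i]; rewrite ?contract0 ?contractS ocompE vtx0E ?cstE. Qed.

Section PathContraction.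
Variables (Y : sSet) (y : Y 0).

Lemma contract_path_pred m (a : ohom m 1) (z : PathS y m) :
  path_pred y (sact (contract a) (sval z) : shiftS Y m).
Proof. by rewrite /path_pred -sact_comp contract_vtx0; apply: svalP z. Qed.

Definition path_contraction : sMap (prodS (PathS y) (Delta 1)) (PathS y).
Proof.
refine (@SMap (prodS (PathS y) (Delta 1)) (PathS y)
  (fun m w => exist _ _ (contract_path_pred w.2 w.1)) _).
by move=> m m' f [z a]; apply: sig_extP; rewrite /= -!sact_comp bar_contract.
Defined.

Lemma path_contraction_top m (z : PathS y m) : path_contraction m (z, cst m ord_max) = z.
Proof. by apply: sig_extP; rewrite /= contract_top sact_id. Qed.

Lemma path_contraction_bot m (z : PathS y m) :
  path_contraction m (z, cst m ord0) = yon (pstar y) m (cst m ord0).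
Proof.
apply: sig_extP; rewrite /= contract_bot sact_comp (svalP z) -!sact_comp.
by congr sact; apply: ohom0_eq.
Qed.

Lemma path_contraction_base m (t : ohom m 0) (a : ohom m 1) :
  path_contraction m (yon (pstar y) m t, a) = yon (pstar y) m t.
Proof. by apply: sig_extP; rewrite /= -!sact_comp; congr sact; apply: ohom0_eq. Qed.

End PathContraction.

Section FibreRetract.
Variables (X Y : sSet) (p : sMap X Y) (y : Y 0).

Definition ppath_contraction : sMap (prodS (Ppath p y) (Delta 1)) (PathS y) :=
  scomp (path_contraction y) (spair (scomp (pb_snd p (jbar y)) prod_fst) prod_snd).

Lemma ppath_contractionE m (b : Ppath p y m) (a : Delta 1 m) :
  ppath_contraction m (b, a) = path_contraction y m (pb_snd p (jbar y) m b, a).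
Proof. by []. Qed.

Definition in_fibre m (b : Ppath p y m) : Prop :=
  pb_snd p (jbar y) m b = yon (pstar y) m (cst m ord0).

Lemma in_fibre_closed : subclosed in_fibre.
Proof. by move=> m n f b e; rewrite /in_fibre smap_nat e -smap_nat /= cst_comp. Qed.

Lemma in_fibre_incl m (a : Fibre p y m) : in_fibre (fib_incl p y m a).
Proof. by apply: (congr1 (yon (pstar y) m)); apply: ohom0_eq. Qed.

Lemma pb_fst_lifts m (b : Ppath p y m) :
  p m (pb_fst p (jbar y) m b) = jbar y m (ppath_contraction m (b, cst m ord_max)).
Proof. by rewrite ppath_contractionE path_contraction_top; apply: pb_square. Qed.

Lemma ppath_contraction_fibre m (b : Ppath p y m) a : in_fibre b ->
  jbar y m (ppath_contraction m (b, a)) = jbar y m (ppath_contraction m (b, cst m ord_max)).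
Proof. by move=> e; rewrite !ppath_contractionE e !path_contraction_base. Qed.

Variable H : sMap (prodS (Ppath p y) (Delta 1)) X.
Hypothesis pH : forall m w, p m (H m w) = jbar y m (ppath_contraction m w).

Lemma fibre_retraction_sq m (b : Ppath p y m) :
  p m (H m (b, cst m ord0)) = yon y m (sconst ord0 m b).
Proof.
rewrite pH ppath_contractionE path_contraction_bot.
by rewrite -[yon _ m _]/(sact _ (pstar y)) smap_nat jbar_pstar.
Qed.

Definition fibre_retraction : sMap (Ppath p y) (Fibre p y) :=
  pb_lift (scomp H (spair sid (sconst ord0))) (sconst ord0) fibre_retraction_sq.

Definition ppath_homotopy : sMap (prodS (Ppath p y) (Delta 1)) (Ppath p y) :=
  pb_lift H ppath_contraction pH.

Lemma fibre_retractionK m (a : Fibre p y m) :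
  (forall m b a, in_fibre b -> H m (b, a) = pb_fst p (jbar y) m b) ->
  fibre_retraction m (fib_incl p y m a) = a.
Proof.
move=> H_fibre; apply: pb_ext; last exact: ohom0_eq.
by rewrite /= H_fibre //; apply: in_fibre_incl.
Qed.

Lemma ppath_homotopy_bot m (b : Ppath p y m) :
  ppath_homotopy m (b, cst m ord0) = fib_incl p y m (fibre_retraction m b).
Proof. by apply: pb_ext => //; apply: path_contraction_bot. Qed.

Lemma ppath_homotopy_top m (b : Ppath p y m) :
  (forall m b, H m (b, cst m ord_max) = pb_fst p (jbar y) m b) ->
  ppath_homotopy m (b, cst m ord_max) = b.
Proof. by move=> H_top; apply: pb_ext; [apply: H_top | apply: path_contraction_top]. Qed.

End FibreRetract.

Theorem proposition4p12 (X Y : sSet) (p : sMap X Y) (y : Y 0) :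
  right_fibration p -> is_deformation_retract (fib_incl p y).
Proof.
move=> p_rfib.
have [H [pH H_top H_fibre]] := right_fibration_homotopy_lift p_rfib (@in_fibre_closed X Y p y)
  (G := scomp (jbar y) (ppath_contraction p y)) (@pb_fst_lifts X Y p y)
  (@ppath_contraction_fibre X Y p y).
exists (fibre_retraction pH), (ppath_homotopy pH); split=> m b.
- exact: fibre_retractionK H_fibre.
- exact: ppath_homotopy_bot.
- exact: ppath_homotopy_top H_top.
Qed.
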